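(* Let $\mathscr{D}$ be a commutative variety, $L:X^{\circledast}\to Y$ a language, and $l,r:E\to X^{\circledast}$ its syntactic congruence. Let $e_L:X^{\circledast}\twoheadrightarrow \mathrm{Syn}(L)$ be the coequalizer of $l,r$ in $\mathbf{Mon}(\mathscr{D})$ (i.e. the quotient $X^{\circledast}/E$). Then there is a unique morphism $f_L:\mathrm{Syn}(L)\to Y$ in $\mathscr{D}$ with $L=f_L\cdot e_L$, and $(\mathrm{Syn}(L),e_L,f_L)$ is the syntactic $\mathscr{D}$-monoid of $L$: $e_L$ recognizes $L$ via $f_L$, and for every surjective $\mathscr{D}$-monoid morphism $e:X^{\circledast}\twoheadrightarrow M$ and morphism $f:M\to Y$ with $L=f\cdot e$ there is a (unique, surjective) $\mathscr{D}$-monoid morphism $h:M\to\mathrm{Syn}(L)$ with $e_L=h\cdot e$ (and then $f=f_L\cdot h$).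
   Context: A commutative variety $\mathscr{D}$ is a variety of finitary algebras in which for all $A,B$ the hom-set $\mathscr{D}(A,B)$ is a subalgebra $[A,B]$ of $B^{|A|}$; it has tensor products representing bimorphisms (maps homomorphic in each variable) and is symmetric monoidal closed. A $\mathscr{D}$-monoid is an algebra $M$ of $\mathscr{D}$ with a monoid structure $(|M|,\bullet,i)$ whose multiplication is a bimorphism; $\mathbf{Mon}(\mathscr{D})$ is the category of $\mathscr{D}$-monoids and homomorphisms that are both $\mathscr{D}$-morphisms and monoid morphisms. $X^{\circledast}$ is the free $\mathscr{D}$-monoid on a fixed object $X$; $Y$ is a fixed object. A language is a morphism $L:X^{\circledast}\to Y$. A $\mathscr{D}$-monoid morphism $e:X^{\circledast}\to M$ recognizes $L$ via $f:M\to Y$ if $L=f\cdot e$. The syntactic congruence of $L$ is $E=\{(u,v)\in|X^{\circledast}|^2\mid\forall x,y:\ L(x\bullet u\bullet y)=L(x\bullet v\bullet y)\}$, with projections $l,r:E\to X^{\circledast}$. The syntactic $\mathscr{D}$-monoid is the smallest $X$-generated $\mathscr{D}$-monoid (surjective $\mathscr{D}$-monoid morphism out of $X^{\circledast}$, ordered by factorization) recognizing $L$. *)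

From mathcomp Require Import all_boot.
Set Implicit Arguments. Unset Strict Implicit. Unset Printing Implicit Defensive.

Record signature := Signature { op :> Type; arity : op -> nat }.

Unset Implicit Arguments.
Inductive term (S : signature) : Type :=
| Var : nat -> term S
| App : forall o : op S, ('I_(arity o) -> term S) -> term S.

Set Implicit Arguments.
Record algebra (S : signature) := Algebra {
  carrier :> Type;
  interp : forall o : op S, ('I_(arity o) -> carrier) -> carrier }.

Fixpoint eval (S : signature) (A : algebra S) (v : nat -> A) (t : term S) : A :=
  match t with
  | Var n => v n
  | App o ts => @interp S A o (fun i => @eval S A v (ts i))
  end.

Record variety := Variety { vsig : signature; veqs : term vsig -> term vsig -> Prop }.

Definition in_variety (D : variety) (A : algebra (vsig D)) : Prop :=
  forall s t, @veqs D s t -> forall v : nat -> A, eval v s = eval v t.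

Definition is_hom (S : signature) (A B : algebra S) (f : A -> B) : Prop :=
  forall (o : op S) (args : 'I_(arity o) -> A),
    f (@interp S A o args) = @interp S B o (fun i => f (args i)).

(* Commutative variety: every hom-set D(A,B) is a subalgebra of B^|A|, i.e. closed
   under pointwise application of every operation. *)
Definition commutative_variety (D : variety) : Prop :=
  forall (A B : algebra (vsig D)), in_variety A -> in_variety B ->
  forall (o : op (vsig D)) (hs : 'I_(arity o) -> A -> B),
    (forall i, is_hom (hs i)) ->
    is_hom (fun a : A => @interp (vsig D) B o (fun i => hs i a)).

Record dmonoid (D : variety) := DMonoid {
  dm_alg :> algebra (vsig D);
  dm_mul : dm_alg -> dm_alg -> dm_alg;
  dm_one : dm_alg }.

Definition is_dmonoid (D : variety) (M : dmonoid D) : Prop :=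
  [/\ in_variety (dm_alg M),
      (forall a b c : M, dm_mul a (dm_mul b c) = dm_mul (dm_mul a b) c),
      (forall a : M, dm_mul (dm_one M) a = a),
      (forall a : M, dm_mul a (dm_one M) = a) &
      ((forall a : M, is_hom (dm_mul a)) /\
       (forall b : M, is_hom (fun a : M => dm_mul a b)))].

Definition is_mon_hom (D : variety) (M N : dmonoid D) (h : M -> N) : Prop :=
  [/\ is_hom h, h (dm_one M) = dm_one N &
      forall a b : M, h (dm_mul a b) = dm_mul (h a) (h b)].

Definition is_free_dmonoid (D : variety) (X : algebra (vsig D))
    (F : dmonoid D) (eta : X -> F) : Prop :=
  [/\ is_dmonoid F, is_hom eta &
      forall (M : dmonoid D), is_dmonoid M ->
      forall g : X -> M, is_hom g ->
      exists g' : F -> M,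
        [/\ is_mon_hom g', (forall x, g' (eta x) = g x) &
            forall g'' : F -> M, is_mon_hom g'' -> (forall x, g'' (eta x) = g x) ->
              forall w, g'' w = g' w]].

Definition syntactic_congruence (D : variety) (F : dmonoid D) (Y : Type)
    (L : F -> Y) (u v : F) : Prop :=
  forall x y : F, L (dm_mul (dm_mul x u) y) = L (dm_mul (dm_mul x v) y).

(* e : F -> S is a coequalizer in Mon(D) of the two projections l, r : E -> F
   of the relation E (unfolded: g . l = g . r  iff  g identifies all pairs of E). *)
Definition is_coequalizer_Mon (D : variety) (F S : dmonoid D)
    (E : F -> F -> Prop) (e : F -> S) : Prop :=
  [/\ is_dmonoid S, is_mon_hom e, (forall u v, E u v -> e u = e v) &
      forall (N : dmonoid D), is_dmonoid N ->
      forall g : F -> N, is_mon_hom g -> (forall u v, E u v -> g u = g v) ->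
      exists h : S -> N,
        [/\ is_mon_hom h, (forall w, g w = h (e w)) &
            forall h' : S -> N, is_mon_hom h' -> (forall w, g w = h' (e w)) ->
              forall s, h' s = h s]].

From mathcomp Require Import all_boot.
From Stdlib Require Import ClassicalEpsilon FunctionalExtensionality.
From Stdlib Require Import PropExtensionality ProofIrrelevance.

Set Implicit Arguments.
Unset Strict Implicit.
Unset Printing Implicit Defensive.

(* The syntactic congruence E of a morphism L is a congruence of D-monoids,
   so X^*/E is a D-monoid; comparing it with Syn(L) through the universal
   property of the coequalizer shows that e_L is surjective with kernel
   exactly E.  Everything else is factorization through surjections: L is
   constant on E-classes, which gives f_L, and the kernel of any recognizer
   e of L is contained in E, which gives h. *)

Record dm_congruence (D : variety) (M : dmonoid D) (R : M -> M -> Prop) : Prop :=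
  DMCongruence {
    cong_refl : forall a, R a a;
    cong_sym : forall a b, R a b -> R b a;
    cong_trans : forall a b c, R a b -> R b c -> R a c;
    cong_op : forall o (us vs : 'I_(arity o) -> M),
      (forall i, R (us i) (vs i)) -> R (interp us) (interp vs);
    cong_mul : forall a a' b b', R a a' -> R b b' ->
      R (dm_mul a b) (dm_mul a' b') }.

Lemma mon_hom_id (D : variety) (M : dmonoid D) : is_mon_hom (fun a : M => a).
Proof. by []. Qed.

Lemma mon_hom_comp (D : variety) (M N P : dmonoid D) (f : M -> N) (g : N -> P) :
  is_mon_hom f -> is_mon_hom g -> is_mon_hom (fun a => g (f a)).
Proof.
case=> f_op f_one f_mul [g_op g_one g_mul].
by split=> [o us | | a b]; rewrite ?f_op ?g_op ?f_one ?g_one ?f_mul ?g_mul.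
Qed.

Section Quotient.

Variables (D : variety) (M : dmonoid D) (R : M -> M -> Prop).
Hypotheses (hM : is_dmonoid M) (hR : dm_congruence R).

Definition qrepr (a : M) : M := epsilon (inhabits (dm_one M)) (R^~ a).

Lemma qrepr_rel a : R (qrepr a) a.
Proof. exact: (epsilon_spec _ (R^~ a) (ex_intro _ a (cong_refl hR a))). Qed.

Lemma qrepr_eq a b : R a b -> qrepr a = qrepr b.
Proof.
move=> Rab; rewrite /qrepr; congr epsilon.
apply: functional_extensionality => z; apply: propositional_extensionality.
split=> Rz; first exact: (cong_trans hR Rz Rab).
exact: (cong_trans hR Rz (cong_sym hR Rab)).
Qed.

Lemma qrepr_idem a : qrepr (qrepr a) = qrepr a.
Proof. exact: qrepr_eq (qrepr_rel a). Qed.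

Definition qtype : Type := {a : M | qrepr a = a}.

Definition qproj (a : M) : qtype := exist _ (qrepr a) (qrepr_idem a).

Lemma qval_inj (p q : qtype) : sval p = sval q -> p = q.
Proof. by apply: eq_sig_hprop => a; exact: proof_irrelevance. Qed.

Lemma qprojK (q : qtype) : qproj (sval q) = q.
Proof. by apply: qval_inj; case: q. Qed.

Lemma qproj_eq a b : R a b -> qproj a = qproj b.
Proof. by move=> Rab; apply: qval_inj; exact: qrepr_eq. Qed.

Lemma qproj_rel a b : qproj a = qproj b -> R a b.
Proof.
move=> /(f_equal sval) /= Eab.
apply: (cong_trans hR (cong_sym hR (qrepr_rel a))); rewrite Eab; exact: qrepr_rel.
Qed.

Definition quot_alg : algebra (vsig D) :=
  @Algebra (vsig D) qtype (fun o qs => qproj (interp (fun i => sval (qs i)))).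

Definition quot_dmonoid : dmonoid D :=
  @DMonoid D quot_alg (fun p q => qproj (dm_mul (sval p) (sval q)))
    (qproj (dm_one M)).

Lemma qproj_op o (us : 'I_(arity o) -> M) :
  qproj (interp us) = @interp _ quot_dmonoid o (fun i => qproj (us i)).
Proof.
by apply: qproj_eq; apply: (cong_op hR) => i; exact: (cong_sym hR (qrepr_rel _)).
Qed.

Lemma qproj_mul a b :
  qproj (dm_mul a b) = @dm_mul _ quot_dmonoid (qproj a) (qproj b).
Proof.
by apply: qproj_eq; apply: (cong_mul hR); exact: (cong_sym hR (qrepr_rel _)).
Qed.

Lemma qproj_eval (v : nat -> quot_dmonoid) t :
  eval v t = qproj (eval (fun n => sval (v n)) t).
Proof.
elim: t => [n | o ts IHts] /=; first by rewrite qprojK.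
apply: qproj_eq; apply: (cong_op hR) => i; rewrite IHts; exact: qrepr_rel.
Qed.

Lemma qproj_mon_hom : is_mon_hom (qproj : M -> quot_dmonoid).
Proof. by split=> //; [exact: qproj_op | exact: qproj_mul]. Qed.

Lemma quot_is_dmonoid : is_dmonoid quot_dmonoid.
Proof.
case: hM => inM mulA mul1m mulm1 [homl homr].
have liftE (q : quot_dmonoid) : q = qproj (sval q) by rewrite qprojK.
have liftsE (o : op (vsig D)) (qs : 'I_(arity o) -> quot_dmonoid) :
    qs = (fun i => qproj (sval (qs i))).
  by apply: functional_extensionality => i; rewrite qprojK.
split.
- by move=> s t Est v; rewrite !qproj_eval (inM s t Est).
- by move=> a b c; rewrite (liftE a) (liftE b) (liftE c) -!qproj_mul mulA.
- by move=> a; rewrite (liftE a) -qproj_mul mul1m.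
- by move=> a; rewrite (liftE a) -qproj_mul mulm1.
split=> [a | b] o qs; rewrite (liftsE o qs) -qproj_op.
- rewrite (liftE a) -qproj_mul homl qproj_op; f_equal.
  by apply: functional_extensionality => i; rewrite qproj_mul.
- rewrite (liftE b) -qproj_mul homr qproj_op; f_equal.
  by apply: functional_extensionality => i; rewrite qproj_mul.
Qed.

Variables (S : dmonoid D) (e : M -> S).
Hypothesis he : is_coequalizer_Mon R e.

Lemma coequalizer_rel u v : e u = e v -> R u v.
Proof.
case: he => _ _ _ univ.
have [h [_ qprojE _]] := univ _ quot_is_dmonoid _ qproj_mon_hom (@qproj_eq).
by move=> Euv; apply: qproj_rel; rewrite !qprojE Euv.
Qed.

(* [e \o sval] splits the comparison map into the quotient, by uniqueness in
   the universal property of [e]. *)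
Lemma coequalizer_surj s : exists w, e w = s.
Proof.
case: he => hS e_mon eR univ.
have [h [h_mon qprojE _]] := univ _ quot_is_dmonoid _ qproj_mon_hom (@qproj_eq).
have [h0 [_ _ e_unique]] := univ _ hS _ e_mon eR.
pose k (q : quot_dmonoid) := e (sval q).
have k_mon : is_mon_hom k.
  have reprE a : e (qrepr a) = e a by apply: eR; exact: qrepr_rel.
  case: e_mon => e_op e_one e_mul.
  by split=> [o qs | | p q]; rewrite /k /= reprE ?e_op ?e_mul.
have khE w : e w = k (h (e w)).
  by rewrite -qprojE /k /=; apply/esym/eR; exact: qrepr_rel.
exists (sval (h s)); rewrite -/(k _).
by rewrite (e_unique _ (mon_hom_comp h_mon k_mon) khE) -(e_unique _ (mon_hom_id S)).
Qed.

End Quotient.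

Lemma syntactic_congruence_lang (D : variety) (F : dmonoid D) (Y : Type)
    (L : F -> Y) : is_dmonoid F ->
  forall u v, syntactic_congruence L u v -> L u = L v.
Proof.
case=> _ _ mul1m mulm1 _ u v /(_ (dm_one F) (dm_one F)).
by rewrite !mul1m !mulm1.
Qed.

Lemma syntactic_dm_congruence (D : variety) (F : dmonoid D)
    (Y : algebra (vsig D)) (L : F -> Y) :
  is_dmonoid F -> is_hom L -> dm_congruence (syntactic_congruence L).
Proof.
case=> _ mulA _ _ [homl homr] hL.
have mull a u v : syntactic_congruence L u v ->
    syntactic_congruence L (dm_mul a u) (dm_mul a v).
  by move=> Euv x y; move: (Euv (dm_mul x a) y); rewrite !mulA.
have mulr b u v : syntactic_congruence L u v ->
    syntactic_congruence L (dm_mul u b) (dm_mul v b).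
  by move=> Euv x y; move: (Euv x (dm_mul b y)); rewrite !mulA.
split=> // [a b Eab x y | a b c Eab Ebc x y | o us vs Euvs x y |].
- by rewrite Eab.
- by rewrite Eab Ebc.
- rewrite homl homr hL homl homr hL; f_equal.
  by apply: functional_extensionality => i; exact: Euvs.
- by move=> a a' b b' Eaa' Ebb' x y; rewrite (mulr b _ _ Eaa') (mull a' _ _ Ebb').
Qed.

Lemma recognizer_ker_syntactic (D : variety) (F M : dmonoid D) (Y : Type)
    (L : F -> Y) (e : F -> M) (f : M -> Y) :
  is_mon_hom e -> (forall w, L w = f (e w)) ->
  forall u v, e u = e v -> syntactic_congruence L u v.
Proof.
by case=> _ _ e_mul Lfe u v Euv x y; rewrite !Lfe !e_mul Euv.
Qed.

Section SurjectiveFactorization.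

Variables (A B C : Type) (e : A -> B) (g : A -> C).
Hypotheses (e_surj : forall b, exists a, e a = b)
           (g_ker : forall a a', e a = e a' -> g a = g a').

Definition surj_section (b : B) : A :=
  sval (constructive_indefinite_description _ (e_surj b)).

Lemma surj_sectionK b : e (surj_section b) = b.
Proof. exact: svalP (constructive_indefinite_description _ (e_surj b)). Qed.

Definition surj_factor (b : B) : C := g (surj_section b).

Lemma surj_factorE a : surj_factor (e a) = g a.
Proof. by apply: g_ker; rewrite surj_sectionK. Qed.

Lemma surj_factor_unique (h : B -> C) :
  (forall a, g a = h (e a)) -> forall b, h b = surj_factor b.
Proof. by move=> ghE b; rewrite -{1}(surj_sectionK b) -ghE. Qed.

Lemma surj_factor_surj :
  (forall c, exists a, g a = c) -> forall c, exists b, surj_factor b = c.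
Proof.
by move=> g_surj c; have [a <-] := g_surj c; exists (e a); rewrite surj_factorE.
Qed.

End SurjectiveFactorization.

Lemma surj_factor_hom (S : signature) (A B C : algebra S) (e : A -> B) (g : A -> C)
    (e_surj : forall b, exists a, e a = b)
    (g_ker : forall a a', e a = e a' -> g a = g a') :
  is_hom e -> is_hom g -> is_hom (surj_factor g e_surj).
Proof.
move=> e_hom g_hom o bs.
have -> : bs = (fun i => e (surj_section e_surj (bs i))).
  by apply: functional_extensionality => i; rewrite surj_sectionK.
rewrite -e_hom (surj_factorE _ g_ker) g_hom; f_equal.
by apply: functional_extensionality => i; rewrite (surj_factorE _ g_ker).
Qed.

Lemma surj_factor_mon_hom (D : variety) (A B C : dmonoid D) (e : A -> B) (g : A -> C)
    (e_surj : forall b, exists a, e a = b)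
    (g_ker : forall a a', e a = e a' -> g a = g a') :
  is_mon_hom e -> is_mon_hom g -> is_mon_hom (surj_factor g e_surj).
Proof.
case=> e_hom e_one e_mul [g_hom g_one g_mul]; split.
- exact: surj_factor_hom g_ker e_hom g_hom.
- by rewrite -e_one (surj_factorE _ g_ker).
- move=> a b; rewrite -(surj_sectionK e_surj a) -(surj_sectionK e_surj b).
  by rewrite -e_mul !(surj_factorE _ g_ker) g_mul.
Qed.

Theorem mainTheorem8 (D : variety) (hD : commutative_variety D)
  (X Y : algebra (vsig D)) (hX : in_variety X) (hY : in_variety Y)
  (Xs : dmonoid D) (eta : X -> Xs) (hfree : is_free_dmonoid (F:=Xs) eta)
  (L : Xs -> Y) (hL : is_hom L)
  (Syn : dmonoid D) (eL : Xs -> Syn)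
  (hcoeq : is_coequalizer_Mon (F:=Xs) (S:=Syn) (syntactic_congruence L) eL) :
  exists fL : Syn -> Y,
    [/\ is_hom fL,
        (forall w, L w = fL (eL w)),
        (forall f' : Syn -> Y, is_hom f' -> (forall w, L w = f' (eL w)) ->
           forall s, f' s = fL s),
        (forall s : Syn, exists w, eL w = s) &
        forall (M : dmonoid D), is_dmonoid M ->
        forall (e : Xs -> M) (f : M -> Y),
          is_mon_hom e -> (forall m : M, exists w, e w = m) ->
          is_hom f -> (forall w, L w = f (e w)) ->
          exists h : M -> Syn,
            [/\ is_mon_hom h,
                (forall w, eL w = h (e w)),
                (forall h' : M -> Syn, is_mon_hom h' -> (forall w, eL w = h' (e w)) ->
                   forall m, h' m = h m),
                (forall s : Syn, exists m, h m = s) &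
                (forall m, f m = fL (h m))]].
Proof.
have [hXs _ _] := hfree.
have hE := syntactic_dm_congruence hXs hL.
have [_ eL_mon eL_E _] := hcoeq.
have [eL_hom _ _] := eL_mon.
have eL_surj := coequalizer_surj hXs hE hcoeq.
have L_ker u v : eL u = eL v -> L u = L v.
  by move/(coequalizer_rel hXs hE hcoeq)/(syntactic_congruence_lang hXs).
exists (surj_factor L eL_surj); split=> //.
- exact: surj_factor_hom L_ker eL_hom hL.
- by move=> w; rewrite (surj_factorE _ L_ker).
- by move=> ? _; exact: surj_factor_unique.
move=> M _ e f e_mon e_surj _ Lfe.
have e_ker u v : e u = e v -> eL u = eL v.
  by move/(recognizer_ker_syntactic e_mon Lfe)/eL_E.
exists (surj_factor eL e_surj); split.
- exact: surj_factor_mon_hom e_ker e_mon eL_mon.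
- by move=> w; rewrite (surj_factorE _ e_ker).
- by move=> ? _; exact: surj_factor_unique.
- exact: surj_factor_surj e_ker eL_surj.
- move=> m; have [w <-] := e_surj m.
  by rewrite (surj_factorE _ e_ker) (surj_factorE _ L_ker) Lfe.
Qed.
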